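(* For an integer $k\ge 3$, let $G_k$ be the plane graph obtained from a cycle $w_0w_1\cdots w_{k-1}w_0$ by adding, for each $i\in\{0,\dots,k-1\}$, a new vertex $p_i$ in the outer face adjacent to $w_i$ and $w_{i+1}$ (indices modulo $k$), embedded so that the result is plane (the cycle bounds an inner face $f_1$, each $p_iw_iw_{i+1}$ bounds a triangular face, and the remaining face is the outer face $f_2$). Then $G_k$ is internally 3-connected, and every spanning tree of the plane dual $G_k^*$ has maximum degree at least $\lceil k/2\rceil$.
   Context: A plane graph is internally 3-connected if it is 2-connected and every 2-vertex cut consists of two vertices of the outer face boundary, each component of the graph minus the cut containing an outer-face vertex. $G_k^*$ denotes the plane dual of $G_k$, which may contain multiple edges. *)

(* Plane graphs are encoded by rotation systems (combinatorial maps). *)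
From mathcomp Require Import all_boot.
Set Implicit Arguments.
Unset Strict Implicit.
Unset Printing Implicit Defensive.

(* Generic notions for a plane graph given by a simple graph adj (symmetric,  *)
(* irreflexive) on a finite vertex type V together with a rotation system:    *)
(* cw v u is the neighbour of v that follows the neighbour u in clockwise     *)
(* order around v.  Darts are ordered pairs (u,v) with adj u v.  Faces are the *)
(* orbits of the face-tracing permutation phi (u,v) = (v, cw v u), seen as    *)
(* sets of darts.                                                             *)
Section PlaneMap.
Variables (V : finType) (adj : rel V) (cw : V -> V -> V).

Definition darts : {set V * V} := [set d : V * V | adj d.1 d.2].
Definition phi (d : V * V) : V * V := (d.2, cw d.2 d.1).
Definition face_of (d : V * V) : {set V * V} := [set d' | fconnect phi d d'].
Definition faces : {set {set V * V}} := [set face_of d | d in darts].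
Definition edge_of (d : V * V) : {set V} := [set d.1; d.2].
Definition gedges : {set {set V}} := [set edge_of d | d in darts].

(* The plane dual G^* (a multigraph): its vertices are the faces, and each    *)
(* edge e of G gives a dual edge joining the (one or two) faces incident to e. *)
Definition incident (F : {set V * V}) (e : {set V}) : bool :=
  [exists d in F, edge_of d == e].
Definition dual_adj (T : {set {set V}}) : rel {set V * V} :=
  fun F G => [&& F \in faces, G \in faces &
                 [exists e in T, incident F e && incident G e]].
Definition dual_connected (T : {set {set V}}) : Prop :=
  forall F G, F \in faces -> G \in faces -> connect (dual_adj T) F G.
Definition dual_spanning_tree (T : {set {set V}}) : Prop :=
  [/\ T \subset gedges, dual_connected T &
      forall e, e \in T -> ~ dual_connected (T :\ e)].
Definition dual_deg (T : {set {set V}}) (F : {set V * V}) : nat :=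
  #|[set e in T | incident F e]|.

Definition avoid (S : {set V}) : rel V :=
  fun x y => [&& adj x y, x \notin S & y \notin S].
Definition connected_avoiding (S : {set V}) : Prop :=
  forall x y, x \notin S -> y \notin S -> connect (avoid S) x y.
Definition two_connected : Prop :=
  [/\ 2 < #|V|, connected_avoiding set0 & forall x, connected_avoiding [set x]].
Definition boundary_vertices (F : {set V * V}) : {set V} := [set d.1 | d in F].
Definition internally_3_connected (outer : {set V * V}) : Prop :=
  two_connected /\
  forall x y, x != y -> ~ connected_avoiding [set x; y] ->
    [/\ x \in boundary_vertices outer, y \in boundary_vertices outer &
        forall z, z \notin [set x; y] ->
          exists2 o, o \in boundary_vertices outer :\: [set x; y] &
                     connect (avoid [set x; y]) z o].
End PlaneMap.

(* The plane graph G_k.  inl i = w_i, inr i = p_i (indices in 'I_k, mod k).   *)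
(* Embedding: w_0..w_{k-1} counterclockwise on a circle, p_i outside near the *)
(* edge w_i w_{i+1}.  Clockwise order around w_i:                             *)
(*    w_{i-1} -> w_{i+1} -> p_i -> p_{i-1} -> w_{i-1};  around p_i: swap.      *)
Section Gk.
Variable k : nat.
Definition GkV : finType := ('I_k + 'I_k)%type.
Notation w := (@inl 'I_k 'I_k).
Notation p := (@inr 'I_k 'I_k).

Definition Gk_adj : rel GkV := fun x y =>
  match x, y with
  | inl i, inl j => (j == ordS i) || (i == ordS j)
  | inl i, inr j => (i == j) || (i == ordS j)
  | inr i, inl j => (j == i) || (j == ordS i)
  | inr _, inr _ => false
  end.

Definition Gk_cw (v u : GkV) : GkV :=
  match v, u with
  | inl i, inl j => if j == ord_pred i then w (ordS i)
                    else if j == ordS i then p i else u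
  | inl i, inr j => if j == i then p (ord_pred i)
                    else if j == ord_pred i then w (ord_pred i) else u
  | inr i, inl j => if j == i then w (ordS i)
                    else if j == ordS i then w i else u
  | inr _, inr _ => u
  end.

Definition Gk_outer : {set GkV * GkV} :=
  [set d | [exists i : 'I_k, d \in face_of Gk_cw (p i, w i)]].
End Gk.
Arguments Gk_adj k : clear implicits.
Arguments Gk_cw k : clear implicits.
Arguments Gk_outer k : clear implicits.

(* Every vertex of G_k lies on the outer face f_2, so internal 3-connectivity
   reduces to 2-connectivity: deleting one vertex leaves a path of the cycle
   w_0 ... w_{k-1} to which every remaining p_i stays attached.
   The faces of G_k are f_1, f_2 and the triangles t_i = p_i w_i w_{i+1}.  The
   triangles have pairwise disjoint edge sets, and each edge of t_i also borders
   f_1 or f_2.  A connected spanning subgraph of G_k^* contains an edge leaving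
   each t_i, hence k distinct edges incident with f_1 or f_2, so one of these
   two faces has degree at least ceil(k/2). *)

From mathcomp Require Import all_boot zify.
Set Implicit Arguments. Unset Strict Implicit. Unset Printing Implicit Defensive.

Section CyclicOrdinals.
Variable n : nat.

Lemma val_iter_ordS (i : 'I_n) m : val (iter m (@ordS n) i) = (i + m) %% n.
Proof.
elim: m => [|m IHm] /=; first by rewrite addn0 modn_small.
by rewrite IHm -addn1 modnDml addn1 addnS.
Qed.

Lemma iter_ordS_onto (i j : 'I_n) : exists m, j = iter m (@ordS n) i.
Proof.
exists (j + n - i); apply: val_inj; rewrite val_iter_ordS.
have -> : i + (j + n - i) = j + n by have := ltn_ord i; lia.
by rewrite modnDr modn_small.
Qed.

Lemma iter_ordS_neq (i : 'I_n) m : 0 < m < n -> iter m (@ordS n) i != i.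
Proof.
move=> /andP[m_gt0 m_lt_n]; apply/eqP => /(congr1 val) /eqP.
rewrite val_iter_ordS => /eqP im_i.
have : i + m == i + 0 %[mod n] by rewrite addn0 im_i modn_small.
by rewrite eqn_modDl !modn_small //; lia.
Qed.

Lemma ordS_ind (P : 'I_n -> Prop) i0 :
  P i0 -> (forall i, P i -> P (ordS i)) -> forall i, P i.
Proof.
move=> P0 PS i; have [m ->] := iter_ordS_onto i0 i.
by elim: m => [|m IHm] //=; apply: PS.
Qed.

Lemma ord_pred_ind (P : 'I_n -> Prop) i0 :
  P i0 -> (forall i, P i -> P (ord_pred i)) -> forall i, P i.
Proof.
move=> P0 Ppred i; have [m] := iter_ordS_onto i i0.
elim: m i0 P0 => [|m IHm] i1 Pi1 e; rewrite {}e /= in Pi1 => //.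
by apply: (IHm _ _ erefl); rewrite -(ordSK (iter m (@ordS n) i)); apply: Ppred.
Qed.

Lemma ordS_neq (i : 'I_n) : 1 < n -> ordS i != i.
Proof. by move=> n_gt1; apply: (@iter_ordS_neq i 1). Qed.

Lemma ordS2_neq (i : 'I_n) : 2 < n -> ordS (ordS i) != i.
Proof. by move=> n_gt2; apply: (@iter_ordS_neq i 2). Qed.

Lemma ord_pred_neq_ordS (i : 'I_n) : 2 < n -> ord_pred i != ordS i.
Proof.
move=> n_gt2; apply: contraNneq (ordS2_neq (ord_pred i) n_gt2).
by move=> e; rewrite ord_predK e.
Qed.

End CyclicOrdinals.

Lemma half_card_le_union (I T : finType) (g : I -> T) (A B : {set T}) :
  injective g -> (forall i, g i \in A :|: B) ->
  (#|I|.+1)./2 <= #|A| \/ (#|I|.+1)./2 <= #|B|.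
Proof.
move=> g_inj gAB; have : #|I| <= #|A| + #|B|.
  rewrite -cardsT -(card_imset setT g_inj).
  apply: leq_trans (leq_subr #|A :&: B| _); rewrite -cardsU.
  by apply/subset_leq_card/subsetP => _ /imsetP[i _ ->].
by rewrite -divn2; lia.
Qed.

Section PlaneMapFacts.
Variables (V : finType) (adj : rel V) (cw : V -> V -> V).

Lemma face_of_refl (d : V * V) : d \in face_of cw d.
Proof. by rewrite inE. Qed.

Lemma face_of_phi (d d' : V * V) :
  d' \in face_of cw d -> phi cw d' \in face_of cw d.
Proof. by rewrite !inE => /connect_trans; apply; apply: fconnect1. Qed.

Lemma face_of_subset (A : {set V * V}) (d : V * V) :
  d \in A -> (forall x, x \in A -> phi cw x \in A) -> face_of cw d \subset A.
Proof.
move=> dA phiA; apply/subsetP => y /[!inE] /connectP[s].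
elim: s d dA => [|x s IHs] d dA /= => [_ -> //|/andP[/eqP <- s_path] y_last].
exact: IHs (phiA _ dA) s_path y_last.
Qed.

Lemma face_of_in_faces (d : V * V) : adj d.1 d.2 -> face_of cw d \in faces adj cw.
Proof. by move=> d_adj; apply: imset_f; rewrite inE. Qed.

Lemma incident_edge_of (F : {set V * V}) (d : V * V) :
  d \in F -> incident F (edge_of d).
Proof. by move=> dF; apply/existsP; exists d; rewrite dF eqxx. Qed.

Lemma edge_of_swap (d : V * V) : edge_of (d.2, d.1) = edge_of d.
Proof. exact: setUC. Qed.

Lemma dual_connected_incident (T : {set {set V}}) (F G : {set V * V}) :
  dual_connected adj cw T -> F \in faces adj cw -> G \in faces adj cw ->
  F != G -> exists2 e, e \in T & incident F e.
Proof.
move=> connT F_face G_face; have /connectP[[|H s] /= path_s ->] := connT _ _ F_face G_face.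
  by rewrite eqxx.
case/andP: path_s => /and3P[_ _ /existsP[e /and3P[eT incF _]]] _ _.
by exists e.
Qed.

End PlaneMapFacts.

Lemma set3P (T : finType) (x a b c : T) :
  reflect [\/ x = a, x = b | x = c] (x \in [set a; b; c]).
Proof.
rewrite !inE; apply: (iffP idP).
  by case/orP=> [/orP[]/eqP->|/eqP->]; [constructor 1|constructor 2|constructor 3].
by case=> ->; rewrite eqxx ?orbT.
Qed.

Section Gk.
Variable k : nat.
Hypothesis k_gt2 : 2 < k.

Local Notation w i := (@inl 'I_k 'I_k i).
Local Notation p i := (@inr 'I_k 'I_k i).
Local Notation adj := (Gk_adj k).
Local Notation cw := (Gk_cw k).

Lemma Gk_adj_sym : symmetric adj.
Proof. by move=> [i|i] [j|j] //=; rewrite ?(eq_sym i j) // orbC. Qed.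

Lemma avoid_sym (S : {set GkV k}) : symmetric (avoid adj S).
Proof. by move=> x y; rewrite /avoid Gk_adj_sym (andbC (x \notin S)). Qed.

Lemma Gk_cycle_connect (S : {set GkV k}) j :
  (forall i, i != j -> w i \notin S) ->
  forall i, w i \notin S -> connect (avoid adj S) (w (ordS j)) (w i).
Proof.
move=> wS; apply: (ordS_ind (i0 := ordS j)) => // i IHi wSi_S.
have [-> //|i_neq_j] := eqVneq i j.
apply: connect_trans (IHi (wS _ i_neq_j)) (connect1 _).
by rewrite /avoid /= eqxx wS.
Qed.

Lemma Gk_connected_avoiding (S : {set GkV k}) j :
  (forall i, i != j -> w i \notin S) -> connected_avoiding adj S.
Proof.
move=> wS; suff from_j x : x \notin S -> connect (avoid adj S) (w (ordS j)) x.
  move=> x y xS yS; apply: connect_trans (from_j y yS).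
  by rewrite (sym_connect_sym (avoid_sym S)) from_j.
case: x => [i|i] pS; first exact: Gk_cycle_connect.
have [l [l_neq_j adj_l]] : exists l, l != j /\ adj (w l) (p i).
  have [<-|i_neq_j] := eqVneq i j; last by exists i; rewrite /= eqxx.
  by exists (ordS i); rewrite /= eqxx orbT ordS_neq // ltnW.
apply: connect_trans (Gk_cycle_connect wS (wS _ l_neq_j)) (connect1 _).
by rewrite /avoid adj_l wS.
Qed.

Lemma Gk_two_connected : two_connected adj.
Proof.
have j0 : 'I_k := Ordinal (ltnW (ltnW k_gt2)).
split.
- by rewrite card_sum card_ord; lia.
- by apply: (Gk_connected_avoiding (j := j0)) => i; rewrite inE.
- by case=> j; apply: (Gk_connected_avoiding (j := j)) => i; rewrite inE //= => /negbTE ->.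
Qed.

Lemma Gk_boundary_vertex (x : GkV k) : x \in boundary_vertices (Gk_outer k).
Proof.
apply/imsetP; case: x => i.
  exists (phi cw (p i, w i)); last by rewrite /phi /=.
  by rewrite inE; apply/existsP; exists i; rewrite inE fconnect1.
by exists (p i, w i) => //; rewrite inE; apply/existsP; exists i; rewrite inE.
Qed.

Lemma Gk_internally_3_connected : internally_3_connected adj (Gk_outer k).
Proof.
(* Since every vertex is on the outer face, z itself is the required [o]. *)
split; first exact: Gk_two_connected.
move=> x y _ _; split; rewrite ?Gk_boundary_vertex // => z z_xy.
by exists z; rewrite // inE z_xy Gk_boundary_vertex.
Qed.

Lemma phi_cycle i : phi cw (w i, w (ordS i)) = (w (ordS i), w (ordS (ordS i))).
Proof. by rewrite /phi /= ordSK eqxx. Qed.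

Lemma phi_spoke i : phi cw (p i, w i) = (w i, p (ord_pred i)).
Proof. by rewrite /phi /= eqxx. Qed.

Lemma phi_spoke_back i : phi cw (w (ordS i), p i) = (p i, w i).
Proof. by rewrite /phi /= (negbTE (ordS_neq i (ltnW k_gt2))) eqxx. Qed.

Definition inner_face i0 := face_of cw (w i0, w (ordS i0)).
Definition outer_face i0 := face_of cw (p i0, w i0).

Lemma inner_face_cycle i0 i : (w i, w (ordS i)) \in inner_face i0.
Proof.
move: i; apply: (ordS_ind (i0 := i0)) => [|j]; first exact: face_of_refl.
by move/face_of_phi; rewrite phi_cycle.
Qed.

Lemma outer_face_spoke i0 i : (p i, w i) \in outer_face i0.
Proof.
move: i; apply: (ord_pred_ind (i0 := i0)) => [|j]; first exact: face_of_refl.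
move/face_of_phi; rewrite phi_spoke -{1}(ord_predK j).
by move/face_of_phi; rewrite phi_spoke_back.
Qed.

Lemma outer_face_spoke_back i0 i : (w (ordS i), p i) \in outer_face i0.
Proof. by have := face_of_phi (outer_face_spoke i0 (ordS i)); rewrite phi_spoke ordSK. Qed.

Definition triangle_darts i : {set GkV k * GkV k} :=
  [set (w (ordS i), w i); (w i, p i); (p i, w (ordS i))].
Definition triangle_edges i : {set {set GkV k}} := (@edge_of _) @: triangle_darts i.

Lemma triangle_face_subset i :
  face_of cw (w (ordS i), w i) \subset triangle_darts i.
Proof.
apply: face_of_subset; first by apply/set3P; constructor 1.
have [i_pred i_S] := (ord_pred_neq_ordS i k_gt2, ordS_neq i (ltnW k_gt2)).
move=> _ /set3P[]->; rewrite /phi /=.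
- by rewrite eq_sym (negbTE i_pred) eqxx; apply/set3P; constructor 2.
- by rewrite eqxx; apply/set3P; constructor 3.
- by rewrite eq_sym (negbTE i_S) ordSK eqxx; apply/set3P; constructor 1.
Qed.

Lemma triangle_face_neq_inner i :
  face_of cw (w (ordS i), w i) != inner_face i.
Proof.
apply/negP => /eqP tri_eq; have := inner_face_cycle i i.
rewrite -tri_eq => /(subsetP (triangle_face_subset i)) /set3P[] // [] _ /eqP.
by rewrite (negbTE (ordS_neq i (ltnW k_gt2))).
Qed.

Lemma tree_meets_triangle_edges (T : {set {set GkV k}}) i :
  dual_connected adj cw T -> exists2 e, e \in T & e \in triangle_edges i.
Proof.
move=> connT; have tri_face : face_of cw (w (ordS i), w i) \in faces adj cw.
  by apply: face_of_in_faces; rewrite /= eqxx orbT.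
have inner_face_face : inner_face i \in faces adj cw.
  by apply: face_of_in_faces; rewrite /= eqxx.
have [e eT /existsP[d /andP[d_tri /eqP d_e]]] :=
  dual_connected_incident connT tri_face inner_face_face (triangle_face_neq_inner i).
by exists e; rewrite // -d_e imset_f // (subsetP (triangle_face_subset i)).
Qed.

Lemma triangle_edges_spoke i l e : e \in triangle_edges i -> p l \in e -> l = i.
Proof. by case/imsetP=> _ /set3P[]-> -> /set2P[] // []. Qed.

Lemma triangle_edges_inj i j e :
  e \in triangle_edges i -> e \in triangle_edges j -> i = j.
Proof.
move=> e_i e_j; case/imsetP: (e_i) => _ /set3P[]-> e_d; last 2 first.
- by apply: (triangle_edges_spoke e_j); rewrite e_d; apply: set22.
- by apply: (triangle_edges_spoke e_j); rewrite e_d; apply: set21.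
case/imsetP: (e_j) => _ /set3P[]-> e_d'; last 2 first.
- by apply: esym (triangle_edges_spoke e_i _); rewrite e_d'; apply: set22.
- by apply: esym (triangle_edges_spoke e_i _); rewrite e_d'; apply: set21.
move: e_d'; rewrite e_d /edge_of /= => cycle_eq.
have /set2P[[]|[] //] : w i \in [set w (ordS j); w j] by rewrite -cycle_eq set22.
have /set2P[[]|[] //] : w j \in [set w (ordS i); w i] by rewrite cycle_eq set22.
by move=> j_Si i_Sj; case/eqP: (ordS2_neq i k_gt2); rewrite -j_Si -i_Sj.
Qed.

Lemma triangle_edge_incident i0 i e : e \in triangle_edges i ->
  incident (inner_face i0) e || incident (outer_face i0) e.
Proof.
case/imsetP=> _ /set3P[]-> ->; rewrite -edge_of_swap /=.
- by rewrite (incident_edge_of (inner_face_cycle i0 i)).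
- by rewrite (incident_edge_of (outer_face_spoke i0 i)) orbT.
- by rewrite (incident_edge_of (outer_face_spoke_back i0 i)) orbT.
Qed.

Lemma Gk_dual_connected_max_degree (T : {set {set GkV k}}) :
  dual_connected adj cw T ->
  exists2 F, F \in faces adj cw & (k.+1)./2 <= dual_deg T F.
Proof.
move=> connT; have i0 : 'I_k := Ordinal (ltnW (ltnW k_gt2)).
have [g gT g_tri] := fin_all_exists2 (tree_meets_triangle_edges (T := T) ^~ connT).
have g_inj : injective g by move=> i j gij; apply: triangle_edges_inj (g_tri i) _; rewrite gij.
have g_in i : g i \in [set e in T | incident (inner_face i0) e] :|:
                      [set e in T | incident (outer_face i0) e].
  by rewrite !inE gT; apply: triangle_edge_incident (g_tri i).
case: (half_card_le_union g_inj g_in); rewrite card_ord => deg_le.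
- by exists (inner_face i0); rewrite // face_of_in_faces //= eqxx.
- by exists (outer_face i0); rewrite // face_of_in_faces //= eqxx.
Qed.

End Gk.

Theorem mainTheorem7 (k : nat) (hk : 3 <= k) :
  internally_3_connected (Gk_adj k) (Gk_outer k) /\
  forall T : {set {set GkV k}},
    dual_spanning_tree (Gk_adj k) (Gk_cw k) T ->
    exists2 F, F \in faces (Gk_adj k) (Gk_cw k) &
               (k.+1)./2 <= dual_deg T F.
Proof.
split; first exact: Gk_internally_3_connected.
by move=> T [_ connT _]; apply: Gk_dual_connected_max_degree.
Qed.
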